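(* Let $T\in\mathcal T_h^i$ be an interface element with plane $\tau(T)$, unit normal $\bar{\mathbf n}$ and point $F$ as in the context, and let $\beta^+\ge\beta^->0$. For every $p\in\mathbb Q_1$ there is exactly one $q\in\mathbb Q_1$ such that (i) $q=p$ on $\tau(T)$, (ii) $p$ and $q$ have the same coefficients of the monomials $xy,yz,xz,xyz$, and (iii) $\beta^-\nabla p(F)\cdot\bar{\mathbf n}=\beta^+\nabla q(F)\cdot\bar{\mathbf n}$. Consequently the operator $\mathcal C_T:\mathbb Q_1\to\mathbb Q_1$, $\mathcal C_T(p)=q$, is well defined, and it is bijective on $\mathbb Q_1$.
   Context: $\mathbb Q_1$ is the space of trilinear polynomials on $\mathbb R^3$, i.e. the span of $x^ay^bz^c$ with $a,b,c\in\{0,1\}$. $\Omega\subset\mathbb R^3$ is a bounded domain (a union of finitely many rectangular parallelepipeds) with a closed $C^2$ surface $\Gamma$ separating it into $\Omega^-$ and $\Omega^+$; $\beta$ equals the positive constant $\beta^\pm$ on $\Omega^\pm$, and it is assumed $\beta^+\ge\beta^-$. $\mathcal T_h$ is a Cartesian mesh by cubes of edge length $h$ such that $\Gamma$ meets every mesh edge in at most one point and the boundary of every mesh face in at most two points, with no vertex on $\Gamma$. For an interface element $T$ (i.e. $T\cap\Gamma\neq\emptyset$), $K_T$ is a triangle whose three vertices are points where $\Gamma$ meets edges of $T$, chosen by a fixed rule (Case 1, $\Gamma$ cuts 3 faces: the three points; Case 2, $\Gamma$ cuts 4 faces separating the endpoints of an edge $e$ from the other vertices: the three points farthest from $e$;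 Case 3, four points on four parallel edges: any three; Case 4, $\Gamma$ cuts 5 faces: the three points on three parallel edges; Case 5, $\Gamma$ cuts 6 faces: every other one of the six points, lying on three mutually orthogonal edges). $\tau(T)$ is the plane containing $K_T$, $\bar{\mathbf n}$ a unit normal of $\tau(T)$, and $F$ the centroid of $K_T$. *)

From HB Require Import structures.
From mathcomp Require Import all_boot all_order all_algebra.
From mathcomp Require Import reals.
Set Implicit Arguments. Unset Strict Implicit. Unset Printing Implicit Defensive.
Import Order.TTheory GRing.Theory Num.Theory.
Local Open Scope ring_scope.

Section Defs.
Variable R : realType.

Definition vec3 := (R * R * R)%type.
Definition vx (v : vec3) : R := v.1.1.
Definition vy (v : vec3) : R := v.1.2.
Definition vz (v : vec3) : R := v.2.
Definition vadd (u v : vec3) : vec3 := (vx u + vx v, vy u + vy v, vz u + vz v).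
Definition vsub (u v : vec3) : vec3 := (vx u - vx v, vy u - vy v, vz u - vz v).
Definition vscale (s : R) (v : vec3) : vec3 := (s * vx v, s * vy v, s * vz v).
Definition dot (u v : vec3) : R := vx u * vx v + vy u * vy v + vz u * vz v.
Definition cross (u v : vec3) : vec3 :=
  (vy u * vz v - vz u * vy v, vz u * vx v - vx u * vz v, vx u * vy v - vy u * vx v).

(* Q1: trilinear polynomials, given by their 8 coefficients on the monomial
   basis 1, x, y, z, xy, yz, xz, xyz. *)
Record Q1 := mkQ1 {
  c1 : R; cx : R; cy : R; cz : R; cxy : R; cyz : R; cxz : R; cxyz : R }.

Definition Q1eval (p : Q1) (X : vec3) : R :=
  let x := vx X in let y := vy X in let z := vz X in
  c1 p + cx p * x + cy p * y + cz p * z + cxy p * (x * y) + cyz p * (y * z)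
  + cxz p * (x * z) + cxyz p * (x * y * z).

Definition Q1grad (p : Q1) (X : vec3) : vec3 :=
  let x := vx X in let y := vy X in let z := vz X in
  (cx p + cxy p * y + cxz p * z + cxyz p * (y * z),
   cy p + cxy p * x + cyz p * z + cxyz p * (x * z),
   cz p + cyz p * y + cxz p * x + cxyz p * (x * y)).

(* The cube T = [a1,a1+h] x [a2,a2+h] x [a3,a3+h] given by its lowest vertex a. *)
Definition is_end (a h t : R) := (t == a) || (t == a + h).
Definition is_inside (a h t : R) := (a < t) && (t < a + h).

Definition on_edge (a : vec3) (h : R) (X : vec3) : Prop :=
  [|| is_inside (vx a) h (vx X) && is_end (vy a) h (vy X) && is_end (vz a) h (vz X),
      is_end (vx a) h (vx X) && is_inside (vy a) h (vy X) && is_end (vz a) h (vz X)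
    | is_end (vx a) h (vx X) && is_end (vy a) h (vy X) && is_inside (vz a) h (vz X)].

Definition in_plane (P1 P2 P3 X : vec3) : Prop :=
  exists s t : R, X = vadd P1 (vadd (vscale s (vsub P2 P1)) (vscale t (vsub P3 P1))).

Definition centroid (P1 P2 P3 : vec3) : vec3 :=
  vscale (3%:R)^-1 (vadd P1 (vadd P2 P3)).

Definition CT_cond (betam betap : R) (P1 P2 P3 n : vec3) (p q : Q1) : Prop :=
  [/\ (forall X, in_plane P1 P2 P3 X -> Q1eval q X = Q1eval p X),
      [/\ cxy q = cxy p, cyz q = cyz p, cxz q = cxz p & cxyz q = cxyz p]
    & betam * dot (Q1grad p (centroid P1 P2 P3)) n
      = betap * dot (Q1grad q (centroid P1 P2 P3)) n].

End Defs.

From HB Require Import structures.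
From mathcomp Require Import all_boot all_order all_algebra.
From mathcomp Require Import reals ring lra.
Import Order.TTheory GRing.Theory Num.Theory.
Local Open Scope ring_scope.

(* The correction C_T(p) = p + lam * n.(X - P1) adds an affine function
   vanishing on tau(T); it keeps the bilinear coefficients and shifts the
   normal flux by lam, so lam is determined by condition (iii).  Uniqueness:
   two solutions differ by an affine function c + g.X vanishing at P1, P2, P3
   with g.n = 0; since P2 - P1, P3 - P1 and n are linearly independent, g = 0
   and then c = 0.  The roles of beta- and beta+ being symmetric, C_T has the
   operator with swapped coefficients as inverse. *)

Section Vec3.
Local Set Implicit Arguments.
Local Unset Strict Implicit.
Context {R : realType}.
Implicit Types u v w g n P X : vec3 R.

Lemma vec3_ext u v : [/\ vx u = vx v, vy u = vy v & vz u = vz v] -> u = v.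
Proof.
by case: u => [[? ?] ?]; case: v => [[? ?] ?]; rewrite /vx /vy /vz /= => -[-> -> ->].
Qed.

Lemma vsub_eq0 u v : vsub u v = (0, 0, 0) -> u = v.
Proof.
by move=> [/eqP + /eqP + /eqP]; rewrite !subr_eq0 => /eqP ex /eqP ey /eqP ez;
  apply: vec3_ext.
Qed.

Lemma dot_subr g u v : dot g (vsub u v) = dot g u - dot g v.
Proof. by rewrite /dot /vsub /vx /vy /vz /=; ring. Qed.

Lemma dot_self_eq0 w : dot w w = 0 -> w = (0, 0, 0).
Proof.
rewrite /dot => w0; apply: vec3_ext; split; apply/eqP; rewrite -sqrf_eq0;
  apply/eqP; nra.
Qed.

Lemma dot_cross_sqr_orth n u v : dot n u = 0 -> dot n v = 0 ->
  dot n (cross u v) ^+ 2 = dot n n * dot (cross u v) (cross u v).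
Proof.
move=> nu nv.
pose w := vsub (vscale (dot n u) v) (vscale (dot n v) u).
have lagrange : dot n (cross u v) ^+ 2
    = dot n n * dot (cross u v) (cross u v) - dot w w.
  by rewrite /w /dot /cross /vsub /vscale /vx /vy /vz /=; ring.
by rewrite lagrange /w nu nv /dot /vsub /vscale /vx /vy /vz /=; ring.
Qed.

Lemma triple_product_neq0 n u v : dot n n != 0 -> cross u v != (0, 0, 0) ->
  dot n u = 0 -> dot n v = 0 -> dot n (cross u v) != 0.
Proof.
move=> nn0 c0 nu nv; rewrite -sqrf_eq0 dot_cross_sqr_orth // mulf_neq0 //.
by apply: contra c0 => /eqP/dot_self_eq0 ->.
Qed.

Lemma cramer3 g u v n :
  vscale (dot n (cross u v)) g
  = vadd (vscale (dot g u) (cross v n))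
      (vadd (vscale (dot g v) (cross n u)) (vscale (dot g n) (cross u v))).
Proof.
by apply: vec3_ext; rewrite /dot /cross /vadd /vscale /vx /vy /vz /=; split; ring.
Qed.

Lemma orth_triple_eq0 g u v n : dot n (cross u v) != 0 ->
  dot g u = 0 -> dot g v = 0 -> dot g n = 0 -> g = (0, 0, 0).
Proof.
move=> d0 gu gv gn; have := cramer3 g u v n; rewrite gu gv gn.
rewrite /vadd /vscale /vx /vy /vz /= !mul0r !addr0 => -[gx gy gz].
by apply: vec3_ext; split; apply: (mulfI d0); rewrite mulr0.
Qed.

End Vec3.

Section Q1.
Local Set Implicit Arguments.
Local Unset Strict Implicit.
Context {R : realType}.
Implicit Types (p q : Q1 R) (l : R) (m n P X : vec3 R).

Definition Q1lin p : vec3 R := (cx p, cy p, cz p).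

Definition Q1_same_nonaffine p q :=
  [/\ cxy q = cxy p, cyz q = cyz p, cxz q = cxz p & cxyz q = cxyz p].

Lemma Q1eval_sub p q X : Q1_same_nonaffine p q ->
  Q1eval q X - Q1eval p X = c1 q - c1 p + dot (vsub (Q1lin q) (Q1lin p)) X.
Proof.
by case=> e1 e2 e3 e4; rewrite /Q1eval e1 e2 e3 e4 /dot /vsub /vx /vy /vz /=; ring.
Qed.

Lemma Q1grad_sub p q X m : Q1_same_nonaffine p q ->
  dot (Q1grad q X) m - dot (Q1grad p X) m = dot (vsub (Q1lin q) (Q1lin p)) m.
Proof.
by case=> e1 e2 e3 e4; rewrite /Q1grad e1 e2 e3 e4 /dot /vsub /vx /vy /vz /=; ring.
Qed.

Lemma Q1_eq p q :
  Q1_same_nonaffine p q -> Q1lin q = Q1lin p -> c1 q = c1 p -> q = p.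
Proof.
case: p q => [? ? ? ? ? ? ? ?] [? ? ? ? ? ? ? ?].
by rewrite /Q1_same_nonaffine /Q1lin /= => -[-> -> -> ->] [-> -> ->] ->.
Qed.

Definition Q1shift p l n P : Q1 R :=
  mkQ1 (c1 p - l * dot n P) (cx p + l * vx n) (cy p + l * vy n)
    (cz p + l * vz n) (cxy p) (cyz p) (cxz p) (cxyz p).

Lemma Q1shift_same_top p l n P : Q1_same_nonaffine p (Q1shift p l n P).
Proof. by []. Qed.

Lemma Q1eval_shift p l n P X :
  Q1eval (Q1shift p l n P) X = Q1eval p X + l * dot n (vsub X P).
Proof. by rewrite /Q1eval /Q1shift /dot /vsub /vx /vy /vz /=; ring. Qed.

Lemma Q1grad_shift p l n P X m :
  dot (Q1grad (Q1shift p l n P) X) m = dot (Q1grad p X) m + l * dot n m.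
Proof. by rewrite /Q1grad /Q1shift /dot /vx /vy /vz /=; ring. Qed.

End Q1.

Section Correction.
Local Set Implicit Arguments.
Local Unset Strict Implicit.
Context {R : realType} (P1 P2 P3 n : vec3 R).
Implicit Types (p q : Q1 R) (X : vec3 R).

Lemma in_plane_vertices :
  [/\ in_plane P1 P2 P3 P1, in_plane P1 P2 P3 P2 & in_plane P1 P2 P3 P3].
Proof.
by split; [exists 0, 0 | exists 1, 0 | exists 0, 1];
  apply: vec3_ext; rewrite /vadd /vscale /vsub /vx /vy /vz /=; split; ring.
Qed.

Hypotheses (n_orth2 : dot n (vsub P2 P1) = 0) (n_orth3 : dot n (vsub P3 P1) = 0).

Lemma in_plane_orth X : in_plane P1 P2 P3 X -> dot n (vsub X P1) = 0.
Proof.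
case=> s [t ->].
have -> : dot n (vsub (vadd P1 (vadd (vscale s (vsub P2 P1))
                                      (vscale t (vsub P3 P1)))) P1)
        = s * dot n (vsub P2 P1) + t * dot n (vsub P3 P1).
  by rewrite /dot /vadd /vscale /vsub /vx /vy /vz /=; ring.
by rewrite n_orth2 n_orth3 !mulr0 addr0.
Qed.

Hypothesis n_unit : dot n n = 1.

Definition CT_map (bm bp : R) p : Q1 R :=
  Q1shift p ((bm - bp) / bp * dot (Q1grad p (centroid P1 P2 P3)) n) n P1.

Lemma CT_map_spec bm bp p :
  bp != 0 -> CT_cond bm bp P1 P2 P3 n p (CT_map bm bp p).
Proof.
move=> bp0; split.
- by move=> X /in_plane_orth X_orth; rewrite Q1eval_shift X_orth mulr0 addr0.
- exact: Q1shift_same_top.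
- by rewrite Q1grad_shift n_unit mulr1; field.
Qed.

Hypothesis nondegenerate : cross (vsub P2 P1) (vsub P3 P1) != (0, 0, 0).

Lemma CT_cond_unique bm bp p q1 q2 : bp != 0 ->
  CT_cond bm bp P1 P2 P3 n p q1 -> CT_cond bm bp P1 P2 P3 n p q2 -> q1 = q2.
Proof.
move=> bp0 [ev1 top1 flux1] [ev2 top2 flux2].
have top : Q1_same_nonaffine q1 q2.
  by case: top1 top2 => [? ? ? ?] [? ? ? ?]; split; congruence.
set g := vsub (Q1lin q2) (Q1lin q1).
have g_plane X : in_plane P1 P2 P3 X -> c1 q2 - c1 q1 + dot g X = 0.
  by move=> hX; rewrite -Q1eval_sub // ev1 // ev2 // subrr.
have [V1 V2 V3] := in_plane_vertices.
have g_orth2 : dot g (vsub P2 P1) = 0.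
  by rewrite dot_subr; move: (g_plane _ V2) (g_plane _ V1); lra.
have g_orth3 : dot g (vsub P3 P1) = 0.
  by rewrite dot_subr; move: (g_plane _ V3) (g_plane _ V1); lra.
have g_orth_n : dot g n = 0.
  rewrite -(Q1grad_sub (centroid P1 P2 P3) n top).
  by apply/eqP; rewrite subr_eq0; apply/eqP/(mulfI bp0); rewrite -flux1 -flux2.
have triple0 : dot n (cross (vsub P2 P1) (vsub P3 P1)) != 0.
  by apply: triple_product_neq0; rewrite ?n_unit ?oner_neq0.
have g0 := orth_triple_eq0 triple0 g_orth2 g_orth3 g_orth_n.
apply/esym/Q1_eq; [exact: top | exact: vsub_eq0 |].
by move: (g_plane _ V1); rewrite g0 /dot /vx /vy /vz /=; lra.
Qed.

End Correction.

Lemma CT_cond_sym (R : realType) (bm bp : R) (P1 P2 P3 n : vec3 R) (p q : Q1 R) :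
  CT_cond bm bp P1 P2 P3 n p q -> CT_cond bp bm P1 P2 P3 n q p.
Proof. by case=> ev [? ? ? ?] flux; split=> // X /ev. Qed.

Theorem theorem3p1 (R : realType) (a : vec3 R) (h : R) (P1 P2 P3 n : vec3 R)
    (betam betap : R) :
  0 < h ->
  on_edge a h P1 -> on_edge a h P2 -> on_edge a h P3 ->
  cross (vsub P2 P1) (vsub P3 P1) != (0, 0, 0) ->
  dot n n = 1 -> dot n (vsub P2 P1) = 0 -> dot n (vsub P3 P1) = 0 ->
  0 < betam -> betam <= betap ->
  (forall p : Q1 R, exists! q : Q1 R, CT_cond betam betap P1 P2 P3 n p q) /\
  (forall C : Q1 R -> Q1 R,
      (forall p, CT_cond betam betap P1 P2 P3 n p (C p)) -> bijective C).
Proof.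
move=> _ _ _ _ nondeg n_unit n_orth2 n_orth3 betam_gt0 betam_le.
have betam0 : betam != 0 by rewrite gt_eqF.
have betap0 : betap != 0 by rewrite gt_eqF // (lt_le_trans betam_gt0).
have spec := CT_map_spec n_orth2 n_orth3 n_unit.
have unique := CT_cond_unique n_orth2 n_orth3 n_unit nondeg.
split=> [p | C C_spec].
  exists (CT_map P1 P2 P3 n betam betap p); split=> [|q]; first exact: spec.
  exact/unique/spec.
exists (CT_map P1 P2 P3 n betap betam) => p.
  by apply: (unique _ _ _ _ _ betam0 (spec _ _ _ betam0)); apply: CT_cond_sym.
by apply: (unique _ _ _ _ _ betap0 (C_spec _)); apply/CT_cond_sym/spec.
Qed.
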